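(* Let $X=\{X_{\mathbf i}\}_{\mathbf i\in\mathbb R^2}$ be a max-stable random field with unit Fréchet margins $F(x)=\exp(-1/x)$, and let $\mathbf A,\mathbf B\subset\mathbb R^2$ be finite nonempty sets. Then the limits below exist and $$CI(\mathbf A,\mathbf B)=\sum_{\mathbf j\in\mathbf A}\frac{\sum_{\emptyset\ne\mathbf J\subseteq\mathbf B}(-1)^{|\mathbf J|+1}\lambda_{\mathbf J,\{\mathbf j\}}}{\epsilon_{\mathbf B}},$$ where $$CI(\mathbf A,\mathbf B)=\lim_{u\uparrow1}E\Big(\sum_{\mathbf j\in\mathbf A}\mathbf 1_{\{F(X_{\mathbf j})>u\}}\ \Big|\ \bigcup_{\mathbf i\in\mathbf B}\{F(X_{\mathbf i})>u\}\Big)$$ and, for finite nonempty $\mathbf J,\mathbf K\subset\mathbb R^2$, $\lambda_{\mathbf J,\mathbf K}=\lim_{u\uparrow1}P\big(\bigcap_{\mathbf j\in\mathbf J}\{F(X_{\mathbf j})>u\}\ \big|\ \bigcap_{\mathbf k\in\mathbf K}\{F(X_{\mathbf k})>u\}\big)$.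
   Context: A random field $X=\{X_{\mathbf i}\}_{\mathbf i\in\mathbb R^2}$ is max-stable with unit Fréchet margins if every $X_{\mathbf i}$ has distribution function $F(x)=\exp(-1/x)$, $x>0$, and for every finite set $\mathbf B=\{\mathbf i_1,\dots,\mathbf i_k\}\subset\mathbb R^2$ the joint distribution is a multivariate extreme value distribution $P(X_{\mathbf i_1}\le x_1,\dots,X_{\mathbf i_k}\le x_k)=\exp(-V_{\mathbf B}(x_1,\dots,x_k))$, $x_j>0$, where the exponent function $V_{\mathbf B}$ is homogeneous of order $-1$. The extremal coefficient of $\mathbf B$ is $\epsilon_{\mathbf B}=V_{\mathbf B}(1,\dots,1)$, so that $P(X_{\mathbf k}\le x\ \forall \mathbf k\in\mathbf B)=\exp(-\epsilon_{\mathbf B}/x)$ for $x>0$. *)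

From Stdlib Require Import Reals List.
Import ListNotations.
Open Scope R_scope.

Definition pt : Type := (R * R)%type.

Record ProbSpace := {
  Omega : Type;
  meas : (Omega -> Prop) -> Prop;
  Pr : (Omega -> Prop) -> R;
  meas_full : meas (fun _ => True);
  meas_compl : forall A, meas A -> meas (fun w => ~ A w);
  meas_cunion : forall A : nat -> Omega -> Prop,
      (forall n, meas (A n)) -> meas (fun w => exists n, A n w);
  Pr_nonneg : forall A, meas A -> 0 <= Pr A;
  Pr_full : Pr (fun _ => True) = 1;
  Pr_sigma : forall A : nat -> Omega -> Prop,
      (forall n, meas (A n)) ->
      (forall m n, m <> n -> forall w, A m w -> A n w -> False) ->
      infinite_sum (fun n => Pr (A n)) (Pr (fun w => exists n, A n w))
}.

Definition Fr (x : R) : R := if Rle_dec x 0 then 0 else exp (- / x).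

(* X is a max-stable random field on R^2 with unit Frechet margins, with
   exponent functions V B (for finite nonempty B, given as a duplicate-free
   list), each homogeneous of order -1. *)
Definition max_stable_unit_frechet (S : ProbSpace) (X : pt -> Omega S -> R)
    (V : list pt -> (pt -> R) -> R) : Prop :=
  (forall i x, meas S (fun w => X i w <= x)) /\
  (forall i x, Pr S (fun w => X i w <= x) = Fr x) /\
  (forall B : list pt, B <> nil -> NoDup B ->
     forall x : pt -> R, (forall i, In i B -> 0 < x i) ->
       Pr S (fun w => forall i, In i B -> X i w <= x i) = exp (- V B x)) /\
  (forall B : list pt, B <> nil -> NoDup B ->
     forall (x : pt -> R) (c : R), (forall i, In i B -> 0 < x i) -> 0 < c ->
       V B (fun i => c * x i) = / c * V B x).

Definition ext_coef (V : list pt -> (pt -> R) -> R) (B : list pt) : R :=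
  V B (fun _ => 1).

Definition exc (S : ProbSpace) (X : pt -> Omega S -> R) (u : R) (i : pt) :
  Omega S -> Prop := fun w => Fr (X i w) > u.

Definition cprob (S : ProbSpace) (E C : Omega S -> Prop) : R :=
  Pr S (fun w => E w /\ C w) / Pr S C.

Definition lambda_u (S : ProbSpace) (X : pt -> Omega S -> R)
    (J K : list pt) (u : R) : R :=
  cprob S (fun w => forall j, In j J -> exc S X u j w)
          (fun w => forall k, In k K -> exc S X u k w).

Definition Rsum_list {A : Type} (f : A -> R) (l : list A) : R :=
  fold_right Rplus 0 (map f l).

(* E( sum_{j in A} 1{F(X_j)>u} | cup_{i in B} {F(X_i)>u} ), the conditional
   expectation of a simple random variable given an event, written out as
   sum_j P({F(X_j)>u} /\ U) / P(U). *)
Definition CI_u (S : ProbSpace) (X : pt -> Omega S -> R)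
    (A B : list pt) (u : R) : R :=
  Rsum_list (fun j => cprob S (exc S X u j)
                          (fun w => exists i, In i B /\ exc S X u i w)) A.

(* All sublists (= subsets, when l has no duplicates). *)
Fixpoint sublists {A : Type} (l : list A) : list (list A) :=
  match l with
  | nil => [nil]
  | x :: t => sublists t ++ map (cons x) (sublists t)
  end.

Definition lim_left1 (f : R -> R) (l : R) : Prop :=
  forall e, 0 < e -> exists d, 0 < d /\
    forall u, 1 - d < u < 1 -> Rabs (f u - l) < e.

(* Write s = -ln u, so that u -> 1^- corresponds to s -> 0^+ and the
   exceedance {F(X_i) > u} is the event {X_i > 1/s}.  By homogeneity of
   the exponent function, P(X_i <= 1/s for all i in L) = exp(-s eps_L).
   Inclusion-exclusion then expresses every probability in the statement
   through these quantities:
   - P(all of K exceed) = 1 - sum_{0 < L <= K} (-1)^(|L|+1) exp(-s eps_L),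
     so lambda_{J,{j}} at level u is a function of s alone, whose limit
     at 0^+ is sum_{0 < L <= J u {j}} (-1)^(|L|+1) eps_L, by the
     elementary limit (1 - exp(-s a)) / (1 - exp(-s b)) -> a / b;
   - P(exceedance at j and somewhere in B) is the signed sum over
     nonempty J <= B of P(exceedance on J u {j}), and
     P(exceedance somewhere in B) = 1 - exp(-s eps_B); hence
     CI(u) = sum_j (sum_J (-1)^(|J|+1) lambda_{J,{j}}(u))
                   * (1 - exp(-s)) / (1 - exp(-s eps_B)),
     and letting s -> 0^+ gives the theorem. *)

From Stdlib Require Import Reals List Lra Lia Classical FunctionalExtensionality PropExtensionality.
Import ListNotations.
Open Scope R_scope.

Section ProbabilityFacts.
Variable S : ProbSpace.

Lemma event_ext (P Q : Omega S -> Prop) : (forall w, P w <-> Q w) -> P = Q.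
Proof.
  intro H; apply functional_extensionality; intro w.
  apply propositional_extensionality; auto.
Qed.

Lemma Pr_ext (P Q : Omega S -> Prop) :
  (forall w, P w <-> Q w) -> Pr S P = Pr S Q.
Proof. intro H; rewrite (event_ext P Q H); reflexivity. Qed.

Lemma meas_ext (P Q : Omega S -> Prop) :
  (forall w, P w <-> Q w) -> meas S P -> meas S Q.
Proof. intro H; rewrite (event_ext P Q H); auto. Qed.

Lemma meas_empty : meas S (fun _ => False).
Proof.
  apply (meas_ext (fun w => ~ True)); [intros; tauto|].
  apply meas_compl, meas_full.
Qed.

Lemma meas_or (P Q : Omega S -> Prop) :
  meas S P -> meas S Q -> meas S (fun w => P w \/ Q w).
Proof.
  intros HP HQ.
  apply (meas_ext (fun w => exists n, (match n with O => P | _ => Q end) w)).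
  - intro w; split.
    + intros [[|n] Hn]; auto.
    + intros [H|H]; [exists O|exists 1%nat]; auto.
  - apply meas_cunion; intros [|n]; auto.
Qed.

Lemma meas_and (P Q : Omega S -> Prop) :
  meas S P -> meas S Q -> meas S (fun w => P w /\ Q w).
Proof.
  intros HP HQ.
  apply (meas_ext (fun w => ~ (~ P w \/ ~ Q w))); [intros; tauto|].
  apply meas_compl, meas_or; apply meas_compl; auto.
Qed.

Lemma meas_forall_in {T : Type} (G : T -> Omega S -> Prop) (L : list T) :
  (forall i, meas S (G i)) -> meas S (fun w => forall i, In i L -> G i w).
Proof.
  intro HG; induction L as [|x t IH].
  - apply (meas_ext (fun _ => True)); [simpl; tauto|apply meas_full].
  - apply (meas_ext (fun w => G x w /\ forall i, In i t -> G i w)).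
    + intro w; simpl; split.
      * intros [H1 H2] i [<-|Hi]; auto.
      * intro H; split; auto.
    + apply meas_and; auto.
Qed.

Lemma meas_exists_in {T : Type} (G : T -> Omega S -> Prop) (L : list T) :
  (forall i, meas S (G i)) -> meas S (fun w => exists i, In i L /\ G i w).
Proof.
  intro HG.
  apply (meas_ext (fun w => ~ forall i, In i L -> ~ G i w)).
  - intro w; split.
    + intro H; apply NNPP; intro H'; apply H; intros i Hi Hg; apply H'; eauto.
    + intros [i [Hi Hg]] H; exact (H i Hi Hg).
  - apply meas_compl, meas_forall_in; intro i; apply meas_compl; auto.
Qed.

(* Countable additivity applied to the constant empty sequence:
   its probability c satisfies (n+1) c -> c, hence c = 0. *)
Lemma Pr_empty : Pr S (fun _ => False) = 0.
Proof.
  pose proof (Pr_sigma S (fun _ _ => False) (fun _ => meas_empty)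
                (fun m n _ w H _ => H)) as H; cbv beta in H.
  rewrite (Pr_ext (fun w => exists _ : nat, False) (fun _ => False)) in H
    by (intros; split; [intros [_ []]|tauto]).
  set (c := Pr S (fun _ => False)) in *.
  assert (Hc : 0 <= c) by apply Pr_nonneg, meas_empty.
  destruct (Rle_lt_or_eq_dec _ _ Hc) as [Hlt|]; [exfalso|auto].
  destruct (H c Hlt) as [N HN].
  specialize (HN (Datatypes.S N) ltac:(lia)); unfold R_dist in HN.
  assert (Hsum : forall n, sum_f_R0 (fun _ => c) n = INR (Datatypes.S n) * c).
  { induction n as [|n IH]; simpl sum_f_R0; [simpl; ring|].
    rewrite IH, (S_INR (Datatypes.S n)); ring. }
  rewrite Hsum, (S_INR (Datatypes.S N)) in HN.
  assert (1 <= INR (Datatypes.S N)) by (rewrite S_INR; pose proof (pos_INR N); lra).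
  rewrite Rabs_right in HN by nra; nra.
Qed.

Lemma Pr_disjoint_union (P Q : Omega S -> Prop) :
  meas S P -> meas S Q -> (forall w, P w -> Q w -> False) ->
  Pr S (fun w => P w \/ Q w) = Pr S P + Pr S Q.
Proof.
  intros HP HQ Hd.
  set (A := fun n : nat => match n with
                           | O => P | 1%nat => Q | _ => fun _ => False end).
  assert (HA : forall n, meas S (A n))
    by (intros [|[|n]]; simpl; auto using meas_empty).
  assert (Hdis : forall m n, m <> n -> forall w, A m w -> A n w -> False)
    by (intros [|[|m]] [|[|n]] Hmn w; simpl; try tauto; try lia; eauto).
  pose proof (Pr_sigma S A HA Hdis) as H.
  rewrite (Pr_ext (fun w => exists n, A n w) (fun w => P w \/ Q w)) in H.
  2:{ intro w; split.
      - intros [[|[|n]] Hn]; simpl in Hn; tauto.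
      - intros [H1|H1]; [exists O|exists 1%nat]; exact H1. }
  apply (uniqueness_sum _ _ _ H).
  intros eps Heps; exists 1%nat; intros n Hn.
  assert (E : sum_f_R0 (fun n => Pr S (A n)) n = Pr S P + Pr S Q).
  { induction n as [|[|n] IH]; [lia|reflexivity|].
    simpl sum_f_R0 in *; rewrite IH by lia; simpl; rewrite Pr_empty; ring. }
  rewrite E; unfold R_dist; rewrite Rminus_diag, Rabs_R0; lra.
Qed.

Lemma Pr_split (E F : Omega S -> Prop) :
  meas S E -> meas S F ->
  Pr S E = Pr S (fun w => E w /\ F w) + Pr S (fun w => E w /\ ~ F w).
Proof.
  intros HE HF; rewrite <- Pr_disjoint_union.
  - apply Pr_ext; intro w; tauto.
  - apply meas_and; auto.
  - apply meas_and; auto using meas_compl.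
  - intros w; tauto.
Qed.

Lemma Pr_compl (E : Omega S -> Prop) :
  meas S E -> Pr S (fun w => ~ E w) = 1 - Pr S E.
Proof.
  intro HE; rewrite <- (Pr_full S).
  rewrite (Pr_split (fun _ => True) E) by auto using meas_full.
  rewrite (Pr_ext (fun w => True /\ E w) E) by tauto.
  rewrite (Pr_ext (fun w => True /\ ~ E w) (fun w => ~ E w)) by tauto; ring.
Qed.

Lemma Pr_mono (P Q : Omega S -> Prop) :
  meas S P -> meas S Q -> (forall w, P w -> Q w) -> Pr S P <= Pr S Q.
Proof.
  intros HP HQ HPQ.
  rewrite (Pr_split Q P HQ HP), (Pr_ext (fun w => Q w /\ P w) P) by firstorder.
  pose proof (Pr_nonneg S _ (meas_and _ _ HQ (meas_compl S P HP))); lra.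
Qed.

End ProbabilityFacts.

Lemma Rsum_app {T : Type} (f : T -> R) l1 l2 :
  Rsum_list f (l1 ++ l2) = Rsum_list f l1 + Rsum_list f l2.
Proof.
  unfold Rsum_list; induction l1 as [|x l1 IH]; simpl; [ring|].
  rewrite IH; ring.
Qed.

Lemma Rsum_map {T U : Type} (f : U -> R) (g : T -> U) l :
  Rsum_list f (map g l) = Rsum_list (fun x => f (g x)) l.
Proof. unfold Rsum_list; rewrite map_map; reflexivity. Qed.

Lemma Rsum_ext_in {T : Type} (f g : T -> R) l :
  (forall x, In x l -> f x = g x) -> Rsum_list f l = Rsum_list g l.
Proof.
  unfold Rsum_list; induction l as [|x l IH]; intro H; simpl; [reflexivity|].
  rewrite H by (simpl; auto); rewrite IH; [reflexivity|].
  intros; apply H; simpl; auto.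
Qed.

Lemma Rsum_opp {T : Type} (f : T -> R) l :
  Rsum_list (fun x => - f x) l = - Rsum_list f l.
Proof. unfold Rsum_list; induction l; simpl; [ring|]; rewrite IHl; ring. Qed.

Lemma Rsum_mult_r {T : Type} (f : T -> R) k l :
  Rsum_list (fun x => f x * k) l = Rsum_list f l * k.
Proof. unfold Rsum_list; induction l; simpl; [ring|]; rewrite IHl; ring. Qed.

Definition ie_sum {T : Type} (L : list T) (f : list T -> R) : R :=
  Rsum_list (fun J => match J with
                      | [] => 0
                      | _ => (-1) ^ (length J + 1) * f J end) (sublists L).

Lemma ie_sum_ext {T : Type} (L : list T) (f g : list T -> R) :
  (forall J, In J (sublists L) -> J <> [] -> f J = g J) ->
  ie_sum L f = ie_sum L g.
Proof.
  intro H; unfold ie_sum; apply Rsum_ext_in; intros [|a J] HJ; [reflexivity|].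
  rewrite H by (auto; congruence); reflexivity.
Qed.

Lemma ie_sum_mult_r {T : Type} (L : list T) (f : list T -> R) k :
  ie_sum L (fun J => f J * k) = ie_sum L f * k.
Proof.
  unfold ie_sum; rewrite <- Rsum_mult_r.
  apply Rsum_ext_in; intros [|a J] _; ring.
Qed.

Lemma alternating_sum_sublists {T : Type} (L : list T) (f : list T -> R) :
  Rsum_list (fun J => (-1) ^ length J * f J) (sublists L) = f [] - ie_sum L f.
Proof.
  unfold ie_sum; induction L as [|x t IH]; simpl.
  - unfold Rsum_list; simpl; ring.
  - rewrite !Rsum_app, !Rsum_map, IH; simpl.
    rewrite (Rsum_ext_in (fun J => (-1) * (-1) ^ length J * f (x :: J))
               (fun J => - ((-1) * (-1) ^ (length J + 1) * f (x :: J))))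
      by (intros; rewrite pow_add; ring).
    rewrite Rsum_opp; ring.
Qed.

Lemma alternating_count_sublists {T : Type} (K : list T) :
  K <> [] -> Rsum_list (fun L => (-1) ^ length L) (sublists K) = 0.
Proof.
  intro HK; destruct K as [|x t]; [congruence|]; simpl.
  rewrite Rsum_app, Rsum_map; simpl.
  rewrite (Rsum_ext_in (fun J => (-1) * (-1) ^ length J) (fun J => - (-1) ^ length J))
    by (intros; ring).
  rewrite Rsum_opp; ring.
Qed.

Lemma ie_sum_one {T : Type} (K : list T) : K <> [] -> ie_sum K (fun _ => 1) = 1.
Proof.
  intro HK; pose proof (alternating_sum_sublists K (fun _ => 1)) as H.
  rewrite (Rsum_ext_in _ (fun L => (-1) ^ length L)) in H by (intros; ring).
  rewrite alternating_count_sublists in H by auto; lra.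
Qed.

Lemma ie_sum_minus {T : Type} (L : list T) (f g : list T -> R) :
  ie_sum L (fun J => f J - g J) = ie_sum L f - ie_sum L g.
Proof.
  unfold ie_sum, Rsum_list; induction (sublists L) as [|J l IH]; simpl; [ring|].
  rewrite IH; destruct J; ring.
Qed.

Lemma ie_sum_singleton {T : Type} (j : T) (f : list T -> R) : ie_sum [j] f = f [j].
Proof. unfold ie_sum, Rsum_list; simpl; ring. Qed.

Lemma sublists_incl {T : Type} (K L : list T) : In L (sublists K) -> incl L K.
Proof.
  revert L; induction K as [|x t IH]; simpl; intros L H.
  - destruct H as [<-|[]]; intros a [].
  - apply in_app_or in H; destruct H as [H|H].
    + intros a Ha; right; exact (IH L H a Ha).
    + apply in_map_iff in H; destruct H as [L' [<- HL']].
      intros a [<-|Ha]; [left; auto|right; exact (IH L' HL' a Ha)].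
Qed.

Lemma sublists_NoDup {T : Type} (K L : list T) : In L (sublists K) -> NoDup K -> NoDup L.
Proof.
  revert L; induction K as [|x t IH]; simpl; intros L H HK.
  - destruct H as [<-|[]]; constructor.
  - inversion HK as [|? ? Hnx Ht]; subst.
    apply in_app_or in H; destruct H as [H|H]; [eauto|].
    apply in_map_iff in H; destruct H as [L' [<- HL']].
    constructor; [|eauto].
    intro Hx; apply Hnx; exact (sublists_incl t L' HL' x Hx).
Qed.


Section InclusionExclusion.
Variables (S : ProbSpace) (T : Type) (F : T -> Omega S -> Prop).
Hypothesis F_meas : forall i, meas S (F i).

Lemma inclusion_exclusion_none (L : list T) (E : Omega S -> Prop) :
  meas S E ->
  Rsum_list (fun J => (-1) ^ length J * Pr S (fun w => E w /\ forall j, In j J -> F j w))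
            (sublists L)
  = Pr S (fun w => E w /\ forall j, In j L -> ~ F j w).
Proof.
  revert E; induction L as [|x t IH]; intros E HE.
  - unfold Rsum_list; simpl.
    rewrite (Pr_ext S (fun w => E w /\ (forall j, False -> F j w))
                      (fun w => E w /\ (forall j, False -> ~ F j w))) by firstorder.
    ring.
  - simpl sublists; rewrite Rsum_app, Rsum_map.
    rewrite (Rsum_ext_in
      (fun J => (-1) ^ length (x :: J) * Pr S (fun w => E w /\ forall j, In j (x :: J) -> F j w))
      (fun J => - ((-1) ^ length J *
                   Pr S (fun w => (E w /\ F x w) /\ forall j, In j J -> F j w)))).
    2:{ intros J _; simpl length.
        rewrite (Pr_ext S _ (fun w => (E w /\ F x w) /\ forall j, In j J -> F j w))
          by (intro w; simpl; firstorder congruence).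
        simpl; ring. }
    rewrite Rsum_opp, IH, IH by auto using meas_and.
    rewrite (Pr_split S (fun w => E w /\ forall j, In j t -> ~ F j w) (F x))
      by (auto; apply meas_and; auto; apply meas_forall_in; intro; apply meas_compl; auto).
    rewrite (Pr_ext S (fun w => (E w /\ (forall j, In j t -> ~ F j w)) /\ F x w)
                      (fun w => (E w /\ F x w) /\ (forall j, In j t -> ~ F j w))) by tauto.
    rewrite (Pr_ext S (fun w => (E w /\ (forall j, In j t -> ~ F j w)) /\ ~ F x w)
                      (fun w => E w /\ (forall j, In j (x :: t) -> ~ F j w)))
      by (intro w; simpl; firstorder congruence).
    ring.
Qed.

Lemma inclusion_exclusion_union (L : list T) (E : Omega S -> Prop) :
  meas S E ->
  Pr S (fun w => E w /\ exists i, In i L /\ F i w) =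
  ie_sum L (fun J => Pr S (fun w => E w /\ forall j, In j J -> F j w)).
Proof.
  intro HE.
  pose proof (inclusion_exclusion_none L E HE) as H.
  rewrite alternating_sum_sublists in H.
  rewrite (Pr_ext S (fun w => E w /\ (forall j, In j [] -> F j w)) E) in H by firstorder.
  rewrite (Pr_ext S (fun w => E w /\ (forall j, In j L -> ~ F j w))
                    (fun w => E w /\ ~ (exists i, In i L /\ F i w))) in H by firstorder.
  rewrite (Pr_split S E (fun w => exists i, In i L /\ F i w)) in H
    by auto using meas_exists_in.
  lra.
Qed.

End InclusionExclusion.

(* Limits as s -> 0^+ are limit1_in on the domain {s | 0 < s}. *)
Lemma limit1_in_ext (f g : R -> R) D l x0 :
  (forall x, D x -> f x = g x) -> limit1_in g D l x0 -> limit1_in f D l x0.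
Proof.
  intros H Hg eps Heps; destruct (Hg eps Heps) as [alp [Ha Hb]].
  exists alp; split; auto; intros x [Dx Hx]; rewrite H by auto; apply Hb; auto.
Qed.

Lemma limit1_in_const (c : R) D x0 : limit1_in (fun _ => c) D c x0.
Proof. exact (limit_free (fun _ => c) D c x0). Qed.

Lemma limit1_in_Rsum {T : Type} (l : list T) (f : T -> R -> R) (g : T -> R) D x0 :
  (forall x, In x l -> limit1_in (f x) D (g x) x0) ->
  limit1_in (fun u => Rsum_list (fun x => f x u) l) D (Rsum_list g l) x0.
Proof.
  induction l as [|a l IH]; intro H; [exact (limit1_in_const 0 D x0)|].
  apply (limit_plus (f a) (fun u => Rsum_list (fun x => f x u) l)).
  - apply H; simpl; auto.
  - apply IH; intros; apply H; simpl; auto.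
Qed.

Lemma limit1_in_ie_sum {T : Type} (L : list T) (f : list T -> R -> R) (l : list T -> R) D x0 :
  (forall J, J <> [] -> limit1_in (f J) D (l J) x0) ->
  limit1_in (fun u => ie_sum L (fun J => f J u)) D (ie_sum L l) x0.
Proof.
  intro H; apply limit1_in_Rsum; intros [|a J] _; [apply limit1_in_const|].
  apply (limit_mul (fun _ => (-1) ^ (length (a :: J) + 1))).
  - apply limit1_in_const.
  - apply H; congruence.
Qed.

(* The derivative of s |-> -exp(-s c) at 0:  (1 - exp(-s c)) / s -> c. *)
Lemma limit_one_minus_exp_over (c : R) :
  limit1_in (fun s => (1 - exp (- (s * c))) / s) (fun s => 0 < s) c 0.
Proof.
  destruct (Req_dec c 0) as [Hc|Hc].
  { subst c; apply (limit1_in_ext _ (fun _ => 0)); [|apply limit1_in_const].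
    intros s Hs; rewrite Rmult_0_r, Ropp_0, exp_0; field; lra. }
  intros eps Heps.
  assert (Hca : 0 < Rabs c) by (apply Rabs_pos_lt; auto).
  destruct (derivable_pt_lim_exp_0 (eps / Rabs c) ltac:(apply Rdiv_lt_0_compat; auto))
    as [delta Hd].
  exists (delta / Rabs c); split; [apply Rdiv_lt_0_compat; auto; apply cond_pos|].
  intros s [Hs Hsd]; simpl in *; unfold R_dist in *.
  rewrite Rminus_0_r, Rabs_right in Hsd by lra.
  set (h := - (s * c)).
  assert (Hh0 : h <> 0) by (unfold h; intro E; apply Hc; nra).
  assert (Hhd : Rabs h < delta).
  { unfold h; rewrite Rabs_Ropp, Rabs_mult, (Rabs_right s) by lra.
    apply (Rmult_lt_compat_r (Rabs c)) in Hsd; auto.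
    unfold Rdiv in Hsd; rewrite Rmult_assoc, Rinv_l, Rmult_1_r in Hsd; lra. }
  specialize (Hd h Hh0 Hhd); rewrite Rplus_0_l, exp_0 in Hd.
  replace ((1 - exp h) / s - c) with (c * ((exp h - 1) / h - 1))
    by (unfold h; field; split; auto; lra).
  rewrite Rabs_mult; apply (Rmult_lt_compat_l (Rabs c)) in Hd; auto.
  replace (Rabs c * (eps / Rabs c)) with eps in Hd by (field; lra); exact Hd.
Qed.

Lemma one_minus_exp_pos (s : R) : 0 < s -> 0 < 1 - exp (- s).
Proof.
  intro Hs; assert (exp (- s) < 1) by (rewrite <- exp_0; apply exp_increasing; lra).
  lra.
Qed.

Lemma limit_exp_ratio (a b : R) : 0 < b ->
  limit1_in (fun s => (1 - exp (- (s * a))) / (1 - exp (- (s * b))))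
            (fun s => 0 < s) (a / b) 0.
Proof.
  intro Hb.
  apply (limit1_in_ext _ (fun s => (1 - exp (- (s * a))) / s * / ((1 - exp (- (s * b))) / s))).
  - intros s Hs; pose proof (one_minus_exp_pos (s * b) ltac:(nra)).
    field; lra.
  - apply limit_mul; [apply limit_one_minus_exp_over|].
    apply limit_inv; [apply limit_one_minus_exp_over|lra].
Qed.

Lemma limit_exp_ratio_unit (b : R) : 0 < b ->
  limit1_in (fun s => (1 - exp (- s)) / (1 - exp (- (s * b))))
            (fun s => 0 < s) (/ b) 0.
Proof.
  intro Hb; replace (/ b) with (1 / b) by (field; lra).
  apply (limit1_in_ext _ (fun s => (1 - exp (- (s * 1))) / (1 - exp (- (s * b))))).
  - intros s _; rewrite Rmult_1_r; reflexivity.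
  - apply limit_exp_ratio; auto.
Qed.

Lemma lim_left1_neglog (f g : R -> R) (l : R) :
  (forall u, 0 < u < 1 -> f u = g (- ln u)) ->
  limit1_in g (fun s => 0 < s) l 0 -> lim_left1 f l.
Proof.
  intros Hfg Hg eps Heps; destruct (Hg eps Heps) as [alp [Ha Hb]].
  pose proof (one_minus_exp_pos alp Ha) as He; pose proof (exp_pos (- alp)).
  exists (Rmin 1 (1 - exp (- alp))); split; [apply Rmin_glb_lt; lra|].
  intros u Hu; pose proof (Rmin_r 1 (1 - exp (- alp))); pose proof (Rmin_l 1 (1 - exp (- alp))).
  assert (Hln : ln u < 0) by (rewrite <- ln_1; apply ln_increasing; lra).
  assert (Hlnb : - alp < ln u) by (rewrite <- (ln_exp (- alp)); apply ln_increasing; lra).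
  rewrite Hfg by lra; apply Hb; split; [simpl; lra|].
  simpl; unfold R_dist; rewrite Rminus_0_r, Rabs_right; lra.
Qed.

(* lambda_{J,{j}} at level u = exp(-s), written through the extremal
   coefficients of the subsets of K = J u {j} (see lambda_u_value). *)
Definition lambda_fn (V : list pt -> (pt -> R) -> R) (K : list pt) (s : R) : R :=
  (1 - ie_sum K (fun L => exp (- (s * ext_coef V L)))) / (1 - exp (- s)).

Lemma lambda_fn_limit (V : list pt -> (pt -> R) -> R) (K : list pt) : K <> [] ->
  limit1_in (lambda_fn V K) (fun s => 0 < s) (ie_sum K (ext_coef V)) 0.
Proof.
  intro HK.
  replace (ie_sum K (ext_coef V)) with (ie_sum K (fun L => ext_coef V L / 1))
    by (apply ie_sum_ext; intros; field).
  apply (limit1_in_ext _ (fun s => ie_sum K (fun L =>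
           (1 - exp (- (s * ext_coef V L))) / (1 - exp (- (s * 1)))))).
  - intros s _; unfold lambda_fn; rewrite Rmult_1_r.
    rewrite <- (ie_sum_one K HK) at 1; rewrite <- ie_sum_minus.
    unfold Rdiv; rewrite <- ie_sum_mult_r; reflexivity.
  - apply limit1_in_ie_sum; intros L _; apply limit_exp_ratio; lra.
Qed.

Definition pt_eq_dec (x y : pt) : {x = y} + {x <> y}.
Proof. unfold pt in *; decide equality; apply Req_dec_T. Defined.

Definition joint_set (J : list pt) (j : pt) : list pt := nodup pt_eq_dec (j :: J).

Lemma joint_set_In (J : list pt) (j k : pt) : In k (joint_set J j) <-> k = j \/ In k J.
Proof. unfold joint_set; rewrite nodup_In; simpl; intuition. Qed.

Lemma joint_set_nonempty (J : list pt) (j : pt) : joint_set J j <> [].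
Proof.
  intro E; pose proof (proj2 (joint_set_In J j j) (or_introl eq_refl)) as H.
  rewrite E in H; exact H.
Qed.

Section MaxStableField.
Variables (S : ProbSpace) (X : pt -> Omega S -> R) (V : list pt -> (pt -> R) -> R).
Hypothesis HX : max_stable_unit_frechet S X V.

(* Since F is increasing, F(X_i) > u exactly when X_i > 1/s, s = -ln u. *)
Lemma exceedance_iff u i w : 0 < u < 1 ->
  (exc S X u i w <-> ~ X i w <= / (- ln u)).
Proof.
  intro Hu; unfold exc, Fr.
  assert (Hl : ln u < 0) by (rewrite <- ln_1; apply ln_increasing; lra).
  set (s := - ln u); assert (Hs : 0 < s) by (unfold s; lra).
  destruct (Rle_dec (X i w) 0) as [Hx|Hx].
  { pose proof (Rinv_0_lt_compat s Hs); split; intro Hexc; lra. }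
  set (x := X i w) in *; assert (Hx0 : 0 < x) by lra.
  split; intro H.
  - intro Hle; apply Rgt_lt in H.
    assert (H' : ln u < ln (exp (- / x))) by (apply ln_increasing; lra).
    rewrite ln_exp in H'.
    pose proof (Rinv_le_contravar _ _ Hx0 Hle) as H2; rewrite Rinv_inv in H2.
    unfold s in H2; lra.
  - apply Rnot_le_lt, Rinv_lt_contravar in H; [|pose proof (Rinv_0_lt_compat s Hs); nra].
    rewrite Rinv_inv in H.
    rewrite <- (exp_ln u) by lra; apply Rlt_gt, exp_increasing; unfold s in H; lra.
Qed.

Lemma meas_exc u i : 0 < u < 1 -> meas S (exc S X u i).
Proof.
  intro Hu; destruct HX as [Hm _].
  apply (meas_ext S (fun w => ~ X i w <= / (- ln u))).
  - intro w; rewrite exceedance_iff by auto; tauto.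
  - apply meas_compl, Hm.
Qed.

(* Homogeneity of V_L: P(X_i <= 1/s for all i in L) = exp(-s eps_L). *)
Lemma Pr_all_below L s : L <> [] -> NoDup L -> 0 < s ->
  Pr S (fun w => forall i, In i L -> X i w <= / s) = exp (- (s * ext_coef V L)).
Proof.
  intros HL HN Hs; destruct HX as [_ [_ [HV Hh]]].
  assert (Hst : 0 < / s) by (apply Rinv_0_lt_compat; auto).
  rewrite (HV L HL HN (fun _ => / s)) by auto.
  replace (fun _ : pt => / s) with (fun i : pt => / s * (fun _ : pt => 1) i)
    by (apply functional_extensionality; intro; ring).
  rewrite Hh by (auto; intros; lra); rewrite Rinv_inv; reflexivity.
Qed.

Lemma Pr_all_exceed K u : NoDup K -> 0 < u < 1 ->
  Pr S (fun w => forall k, In k K -> exc S X u k w) =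
  1 - ie_sum K (fun L => exp (- (- ln u * ext_coef V L))).
Proof.
  intros HN Hu; pose proof HX as [Hm _].
  assert (Hl : ln u < 0) by (rewrite <- ln_1; apply ln_increasing; lra).
  pose proof (inclusion_exclusion_none S pt (fun i w => X i w <= / (- ln u))
                (fun i => Hm i _) K (fun _ => True) (meas_full S)) as H.
  rewrite alternating_sum_sublists in H.
  rewrite (Pr_ext S (fun w => True /\ forall j, In j [] -> X j w <= / - ln u)
                    (fun _ => True)), Pr_full in H by firstorder.
  rewrite (Pr_ext S (fun w => True /\ forall j, In j K -> ~ X j w <= / - ln u)
                    (fun w => forall k, In k K -> exc S X u k w)) in H.
  2:{ intro w; split; [intros [_ Hw] k Hk; apply exceedance_iff; auto|].
      intro Hall; split; auto; intros k Hk; apply exceedance_iff; auto. }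
  rewrite <- H.
  f_equal; apply ie_sum_ext; intros L HL HL0.
  rewrite (Pr_ext S _ (fun w => forall i, In i L -> X i w <= / (- ln u))) by tauto.
  apply Pr_all_below; [auto|eapply sublists_NoDup; eauto|lra].
Qed.

(* Unit Frechet margins: eps_{j} = 1. *)
Lemma ext_coef_singleton j : ext_coef V [j] = 1.
Proof.
  pose proof (Pr_all_below [j] 1 ltac:(congruence) ltac:(repeat constructor; simpl; tauto)
                Rlt_0_1) as H.
  destruct HX as [_ [HF _]].
  rewrite Rinv_1, (Pr_ext S _ (fun w => X j w <= 1)) in H
    by (intro; simpl; firstorder congruence).
  rewrite HF, Rmult_1_l in H; unfold Fr in H.
  destruct (Rle_dec 1 0); [lra|]; rewrite Rinv_1 in H.
  apply exp_inv in H; lra.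
Qed.

(* eps_B >= 1: joint non-exceedance is at most marginal non-exceedance. *)
Lemma ext_coef_ge1 B : B <> [] -> NoDup B -> 1 <= ext_coef V B.
Proof.
  intros HB HN; destruct B as [|b B']; [congruence|].
  pose proof HX as [Hm _].
  pose proof (Pr_mono S (fun w => forall i, In i (b :: B') -> X i w <= / 1)
                (fun w => forall i, In i [b] -> X i w <= / 1)
                (meas_forall_in S _ _ (fun i => Hm i _)) (meas_forall_in S _ _ (fun i => Hm i _))
                ltac:(intros w H i [<-|[]]; apply H; simpl; auto)) as H.
  rewrite !Pr_all_below, ext_coef_singleton in H
    by (auto; try lra; try congruence; repeat constructor; simpl; tauto).
  destruct (Rle_or_lt 1 (ext_coef V (b :: B'))) as [|Hlt]; auto.
  assert (exp (- (1 * 1)) < exp (- (1 * ext_coef V (b :: B')))) by (apply exp_increasing; lra).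
  lra.
Qed.

Lemma Pr_exceed_single j u : 0 < u < 1 ->
  Pr S (fun w => forall k, In k [j] -> exc S X u k w) = 1 - exp (- - ln u).
Proof.
  intro Hu; rewrite Pr_all_exceed by (auto; repeat constructor; simpl; tauto).
  rewrite ie_sum_singleton, ext_coef_singleton, Rmult_1_r; reflexivity.
Qed.

Lemma Pr_exceed_some B u : B <> [] -> NoDup B -> 0 < u < 1 ->
  Pr S (fun w => exists i, In i B /\ exc S X u i w) = 1 - exp (- (- ln u * ext_coef V B)).
Proof.
  intros HB HN Hu.
  assert (Hl : ln u < 0) by (rewrite <- ln_1; apply ln_increasing; lra).
  rewrite <- Pr_all_below by (auto; lra).
  enough (Pr S (fun w => ~ exists i, In i B /\ exc S X u i w) =
          Pr S (fun w => forall i, In i B -> X i w <= / - ln u)) as E.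
  { rewrite Pr_compl in E; [lra|apply meas_exists_in; intro; apply meas_exc; auto]. }
  apply Pr_ext; intro w; split.
  - intros H i Hi; apply NNPP; intro H'; apply H; exists i; split; auto.
    apply exceedance_iff; auto.
  - intros H [i [Hi He]]; apply exceedance_iff in He; auto.
Qed.

Lemma lambda_u_value J j u : 0 < u < 1 ->
  lambda_u S X J [j] u = lambda_fn V (joint_set J j) (- ln u).
Proof.
  intro Hu; unfold lambda_u, cprob, lambda_fn; rewrite Pr_exceed_single by auto.
  f_equal; rewrite <- Pr_all_exceed by (auto; apply NoDup_nodup).
  apply Pr_ext; intro w; split.
  - intros [H1 H2] k Hk; apply joint_set_In in Hk; destruct Hk as [->|Hk];
      [apply H2; simpl|apply H1]; auto.
  - intro H; split; intros k Hk; apply H, joint_set_In;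
      [right; exact Hk|left; destruct Hk as [<-|[]]; reflexivity].
Qed.

Lemma CI_u_value A B u : B <> [] -> NoDup B -> 0 < u < 1 ->
  CI_u S X A B u =
  Rsum_list (fun j => ie_sum B (fun J => lambda_u S X J [j] u)) A *
  ((1 - exp (- - ln u)) / (1 - exp (- (- ln u * ext_coef V B)))).
Proof.
  intros HB HN Hu; unfold CI_u; rewrite <- Rsum_mult_r.
  apply Rsum_ext_in; intros j _; unfold cprob.
  assert (Hl : ln u < 0) by (rewrite <- ln_1; apply ln_increasing; lra).
  pose proof (one_minus_exp_pos (- ln u) ltac:(lra)).
  pose proof (one_minus_exp_pos (- ln u * ext_coef V B)
                ltac:(pose proof (ext_coef_ge1 B HB HN); nra)).
  rewrite Pr_exceed_some, inclusion_exclusion_union by auto using meas_exc.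
  rewrite (ie_sum_ext B _ (fun J => lambda_u S X J [j] u * (1 - exp (- - ln u)))).
  - rewrite ie_sum_mult_r; field; lra.
  - intros J _ _; unfold lambda_u, cprob; rewrite Pr_exceed_single by auto.
    rewrite (Pr_ext S (fun w => (forall i, In i J -> exc S X u i w) /\
                               (forall k, In k [j] -> exc S X u k w))
                      (fun w => exc S X u j w /\ (forall i, In i J -> exc S X u i w)))
      by (intro w; simpl; firstorder congruence).
    field; lra.
Qed.

End MaxStableField.

Theorem mainTheorem2 (S : ProbSpace) (X : pt -> Omega S -> R)
    (V : list pt -> (pt -> R) -> R) (A B : list pt) :
  max_stable_unit_frechet S X V ->
  A <> nil -> NoDup A -> B <> nil -> NoDup B ->
  exists lam : list pt -> pt -> R,
    (forall J j, In J (sublists B) -> J <> nil -> In j A ->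
       lim_left1 (fun u => lambda_u S X J [j] u) (lam J j)) /\
    lim_left1 (CI_u S X A B)
      (Rsum_list (fun j =>
          Rsum_list (fun J : list pt => match J with nil => 0 | _ =>
                              (-1) ^ (length J + 1) * lam J j end)
                    (sublists B) / ext_coef V B) A).
Proof.
  intros HX HA HNA HB HNB.
  exists (fun J j => ie_sum (joint_set J j) (ext_coef V)).
  split.
  - intros J j _ _ _.
    apply (lim_left1_neglog _ (lambda_fn V (joint_set J j))).
    + intros u Hu; apply lambda_u_value; auto.
    + apply lambda_fn_limit, joint_set_nonempty.
  - change (lim_left1 (CI_u S X A B) (Rsum_list (fun j =>
      ie_sum B (fun J => ie_sum (joint_set J j) (ext_coef V)) * / ext_coef V B) A)).
    rewrite Rsum_mult_r.
    apply (lim_left1_neglog _ (fun s =>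
      Rsum_list (fun j => ie_sum B (fun J => lambda_fn V (joint_set J j) s)) A *
      ((1 - exp (- s)) / (1 - exp (- (s * ext_coef V B)))))).
    + intros u Hu; rewrite (CI_u_value S X V HX) by auto; f_equal.
      apply Rsum_ext_in; intros j _; apply ie_sum_ext; intros J _ _.
      apply (lambda_u_value S X V HX); auto.
    + apply limit_mul.
      * apply limit1_in_Rsum; intros j _; apply limit1_in_ie_sum; intros J _.
        apply lambda_fn_limit, joint_set_nonempty.
      * apply limit_exp_ratio_unit; pose proof (ext_coef_ge1 S X V HX B HB HNB); lra.
Qed.
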